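(* An instance $I=(\mathcal{G},k,\ell)$ of Multistage Vertex Cover is a yes-instance if and only if there is a directed path from $s$ to $t$ in the configuration graph of $I$.
   Context: A temporal graph $\mathcal{G}$ is a sequence of layers (static graphs) $(G_1,\dots,G_\tau)$ on a common vertex set $V(\mathcal{G})$. Multistage Vertex Cover: given $\mathcal{G}$ and integers $k\in\mathbb{N}$, $\ell\in\mathbb{N}_0$, where throughout $0<k<|V(\mathcal{G})|$, decide whether there is $(S_1,\dots,S_\tau)$ with each $S_i\subseteq V(\mathcal{G})$ a vertex cover of $G_i$, $|S_i|\le k$, and $|S_i\triangle S_{i+1}|\le\ell$ for $i<\tau$ ($\triangle$ = symmetric difference). The configuration graph of $(\mathcal{G},k,\ell)$ is a directed graph $D$ with vertex set $V_1\uplus\cdots\uplus V_\tau\uplus\{s,t\}$ and a map $\gamma$ from $V_1\uplus\cdots\uplus V_\tau$ to subsets of $V(\mathcal{G})$ of size at most $k$ such that: (i) for every $i\in\{1,\dots,\tau\}$, a set $S$ is a vertex cover of $G_i$ of size exactly $k-1$ or $k$ if and only if there is $v\in V_i$ with $\gamma(v)=S$; (ii) there is an arc from $v$ to $w$ if and only if $v\in V_i$, $w\in V_{i+1}$ for some $i$ and $|\gamma(v)\triangle\gamma(w)|\le\ell$; (iii) there is an arc $(s,v)$ for every $v\in V_1$ and an arc $(v,t)$ for every $v\in V_\tau$ (and no other arcs). *)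

From mathcomp Require Import all_boot.
Set Implicit Arguments. Unset Strict Implicit. Unset Printing Implicit Defensive.

Definition simple_graph (V : finType) (e : rel V) : Prop :=
  symmetric e /\ irreflexive e.

Definition vertex_cover (V : finType) (e : rel V) (S : {set V}) : Prop :=
  forall u v, e u v -> (u \in S) || (v \in S).

Definition symdiff (V : finType) (A B : {set V}) : {set V} :=
  (A :\: B) :|: (B :\: A).

(* A temporal graph with lifetime tau is given by layers G 1, ..., G tau
   (values of G outside 1..tau are irrelevant). *)
Definition mvc_yes (V : finType) (tau : nat) (G : nat -> rel V) (k l : nat) : Prop :=
  exists S : nat -> {set V},
    (forall i, 1 <= i <= tau -> vertex_cover (G i) (S i) /\ #|S i| <= k) /\
    (forall i, 1 <= i < tau -> #|symdiff (S i) (S i.+1)| <= l).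

(* (N, arc, s, t, lay, gamma) is a configuration graph of (G, k, l):
   the node set is N; nodes other than s and t are the "inner" nodes,
   partitioned into V_1, ..., V_tau by lay (v in V_i iff lay v = i);
   gamma maps inner nodes to vertex subsets of size at most k. *)
Definition config_graph (V : finType) (tau : nat) (G : nat -> rel V) (k l : nat)
  (N : finType) (arc : rel N) (s t : N) (lay : N -> nat) (gamma : N -> {set V})
  : Prop :=
  let inner v := (v != s) && (v != t) in
  [/\ s != t,
      (forall v, inner v -> 1 <= lay v <= tau),
      (forall v, inner v -> #|gamma v| <= k),
      (forall i (S : {set V}), 1 <= i <= tau ->
         (vertex_cover (G i) S /\ ((#|S| == k.-1) || (#|S| == k))) <->
         (exists v, [/\ inner v, lay v = i & gamma v = S])) &
      (forall x y, arc x y <->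
         [\/ x = s /\ inner y /\ lay y = 1,
             inner x /\ y = t /\ lay x = tau
           | [/\ inner x, inner y, lay y = (lay x).+1 &
                 #|symdiff (gamma x) (gamma y)| <= l]])].

From mathcomp Require Import all_boot zify.

Set Implicit Arguments.
Unset Strict Implicit.
Unset Printing Implicit Defensive.

(* Walking from s to t in the configuration graph means visiting one node of
   each layer V_1, ..., V_tau in turn, so s-t paths are exactly solutions whose
   covers all have size k-1 or k.  Any solution can be padded to such sizes
   without increasing a single symmetric difference: while some cover has fewer
   than k-1 vertices, take a maximal run of equal covers of minimum size and add
   to it a vertex of the cover just before the run and one of the cover just
   after it (each has a vertex outside the run, being different and no
   smaller).  Each boundary difference loses the first vertex and gains at most
   the second one, and the total deficit sum_i (k - |S_i|) decreases. *)

Lemma exists_argmin (f : nat -> nat) n :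
  exists2 j, j <= n & forall i, i <= n -> f j <= f i.
Proof.
elim: n => [|n [j le_jn min_j]]; first by exists 0 => // i; rewrite leqn0 => /eqP->.
have [le_j|lt_n] := leqP (f j) (f n.+1).
  by exists j => [|i]; [exact: leqW | rewrite leq_eqVlt ltnS => /orP[/eqP->|/min_j]].
exists n.+1 => // i; rewrite leq_eqVlt ltnS => /orP[/eqP->|/min_j] //.
exact/leq_trans/ltnW.
Qed.

Lemma maximal_constant_run (T : eqType) (S : nat -> T) n j : j <= n ->
  exists a b, [/\ a <= j <= b, b <= n, forall p, a <= p <= b -> S p = S j,
                  0 < a -> S a.-1 != S j & b < n -> S b.+1 != S j].
Proof.
move=> le_jn.
pose right_end p := (j < p) && ((p == n.+1) || (S p != S j)).
pose left_end p := (p <= j) && ((p == 0) || (S p.-1 != S j)).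
have right_end_ex : exists p, right_end p.
  by exists n.+1; rewrite /right_end eqxx ltnS le_jn.
have left_end_ex : exists p, left_end p by exists 0.
have left_end_le p : left_end p -> p <= j by case/andP.
case: (ex_minnP right_end_ex) => c /andP[lt_jc end_c] min_c.
case: (ex_maxnP left_end_ex left_end_le) => a /andP[le_aj end_a] max_a.
have le_cn : c <= n.+1 by apply: min_c; rewrite /right_end eqxx ltnS le_jn.
exists a, c.-1; split.
- by rewrite le_aj; lia.
- by lia.
- move=> p /andP[le_ap le_pc]; case: (ltngtP p j) => [lt_pj|lt_jp|-> //].
    have : ~~ left_end p.+1 by apply: contraTN lt_pj => /max_a; lia.
    by rewrite /left_end lt_pj /= negbK => /eqP.
  have : ~~ right_end p by apply: contraTN le_pc => /min_c; lia.
  by rewrite /right_end lt_jp /= negb_or negbK => /andP[_ /eqP].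
- by move=> a_gt0; move: end_a; rewrite eqn0Ngt a_gt0.
- move=> lt_cn; move: end_c; rewrite prednK; last by lia.
  by have -> : (c == n.+1) = false by lia.
Qed.

Lemma ltn_sum_ord n (F G : nat -> nat) j : j <= n ->
  (forall i, i <= n -> F i <= G i) -> F j < G j ->
  \sum_(i < n.+1) F i < \sum_(i < n.+1) G i.
Proof.
move=> le_jn le_FG lt_FGj; pose j' : 'I_n.+1 := Ordinal (le_jn : j < n.+1).
rewrite (bigD1 j') // [X in _ < X](bigD1 j') //= -addSn.
by apply: leq_add => //; apply: leq_sum => i _; apply: le_FG; rewrite -ltnS.
Qed.

Section FiniteSets.
Variable V : finType.
Implicit Types A B : {set V}.

Lemma symdiffC A B : symdiff A B = symdiff B A.
Proof. by rewrite /symdiff setUC. Qed.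

Lemma card_symdiff_setU2 A B y z : y \in A -> y \notin B ->
  #|symdiff A (B :|: [set y; z])| <= #|symdiff A B|.
Proof.
move=> yA yNB.
have sub : symdiff A (B :|: [set y; z]) \subset (symdiff A B :\ y) :|: [set z].
  apply/subsetP => x; rewrite /symdiff !inE.
  case: (x =P y) => [->|_]; first by rewrite yA (negbTE yNB) /=; case: (y == z).
  by case: (x == z); case: (x \in A); case: (x \in B).
apply: leq_trans (subset_leq_card sub) _.
rewrite cardsU cards1 (cardsD1 y (symdiff A B)).
have -> : y \in symdiff A B by rewrite /symdiff !inE yA yNB.
lia.
Qed.

Lemma exists_new_elem A B : #|A| <= #|B| -> B != A -> exists2 y, y \in B & y \notin A.
Proof.
move=> le_AB neq_BA.
have : ~~ (B \subset A) by apply: contra neq_BA => sub; rewrite eqEcard sub le_AB.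
by case/subsetPn => y; exists y.
Qed.

Lemma exists_nonmember A : #|A| < #|V| -> exists y, y \notin A.
Proof.
move=> lt_AV; have : 0 < #|~: A| by have := cardsC A; lia.
by rewrite card_gt0 => /set0Pn[y]; rewrite inE; exists y.
Qed.

End FiniteSets.

Section Padding.
Variables (V : finType) (k : nat).
Hypothesis k_lt_V : k < #|V|.
Implicit Types S T : nat -> {set V}.

Definition pads n T S :=
  (forall i, i <= n -> S i \subset T i) /\
  (forall i, i < n -> #|symdiff (T i) (T i.+1)| <= #|symdiff (S i) (S i.+1)|).

Definition deficit n S := \sum_(i < n.+1) (k - #|S i|).

Lemma pads_raise_run n S (A : {set V}) a b y z : a <= b <= n ->
  (forall p, a <= p <= b -> S p = A) ->
  (0 < a -> y \in S a.-1 :\: A) -> (b < n -> z \in S b.+1 :\: A) ->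
  pads n (fun p => if a <= p <= b then A :|: [set y; z] else S p) S.
Proof.
move=> /andP[le_ab le_bn] run y_new z_new; split => p le_pn.
  by case: ifP => [in_p|_] //; rewrite run // subsetUl.
case: (boolP (a <= p <= b)) => in_p; case: (boolP (a <= p.+1 <= b)) => in_p1.
- by rewrite /symdiff setDv setU0 cards0.
- have p_b : p = b by lia.
  have /setDP[zS zNA] := z_new ltac:(lia).
  rewrite p_b (run b) ?le_ab ?leqnn // symdiffC [symdiff A _]symdiffC.
  by rewrite [[set y; z]]setUC; apply: card_symdiff_setU2.
- have p_a : p = a.-1 by lia.
  have /setDP[yS yNA] := y_new ltac:(lia).
  by rewrite (run p.+1 in_p1) p_a; apply: card_symdiff_setU2.
- by [].
Qed.

Lemma pads_lower_deficit n S : (forall i, i <= n -> #|S i| <= k) ->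
    (exists2 i, i <= n & #|S i| < k.-1) ->
  exists T, [/\ pads n T S, forall i, i <= n -> #|T i| <= k & deficit n T < deficit n S].
Proof.
move=> le_Sk [i le_in small_i].
have [j le_jn min_j] := exists_argmin (fun p => #|S p|) n.
have [a [b [/andP[le_aj le_jb] le_bn run neq_l neq_r]]] := maximal_constant_run S le_jn.
set A := S j in min_j run neq_l neq_r *.
have small_A : #|A| + 2 <= k by have := min_j i le_in; lia.
have [y y_new y_out] : exists2 y, (0 < a -> y \in S a.-1 :\: A) & y \notin A.
  have [a_0|a_gt0] := posnP a.
    by have [y y_out] := @exists_nonmember _ A ltac:(lia); exists y; rewrite ?a_0.
  have [|y yS y_out] := exists_new_elem (min_j a.-1 _) (neq_l a_gt0); first lia.
  by exists y => //; rewrite inE yS y_out.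
have [z z_new] : exists z, b < n -> z \in S b.+1 :\: A.
  have [lt_bn|] := ltnP b n; last by move=> le_nb; exists y => ?; lia.
  have [z zS z_out] := exists_new_elem (min_j b.+1 lt_bn) (neq_r lt_bn).
  by exists z; rewrite inE zS z_out.
pose Y := A :|: [set y; z].
pose T p := if a <= p <= b then Y else S p.
have le_Yk : #|Y| <= k by rewrite /Y cardsU cards2; lia.
have lt_AY : #|A| < #|Y|.
  apply: proper_card; apply/properP; split; first exact: subsetUl.
  by exists y => //; rewrite !inE eqxx orbT.
have pads_T : pads n T S := @pads_raise_run n S A a b y z ltac:(lia) run y_new z_new.
exists T; split => //.
  by move=> p le_pn; rewrite /T; case: ifP => _; [exact: le_Yk | exact: le_Sk].
have [sub_T _] := pads_T.
apply: (@ltn_sum_ord n (fun p => k - #|T p|) (fun p => k - #|S p|) j le_jn) => [p le_pn|].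
  by apply: leq_sub2l; apply: subset_leq_card; apply: sub_T.
by rewrite /T le_aj le_jb -/A /=; lia.
Qed.

Lemma exists_padding n S : (forall i, i <= n -> #|S i| <= k) ->
  exists T, pads n T S /\ forall i, i <= n -> k.-1 <= #|T i| <= k.
Proof.
have [m] := ubnP (deficit n S); elim: m S => // m IH S lt_def le_Sk.
case: (boolP [exists i : 'I_n.+1, #|S i| < k.-1]) => [/existsP[i small_i]|/existsPn large].
  have [T [[sub_T cost_T] le_Tk lt_TS]] :=
    pads_lower_deficit le_Sk (ex_intro2 _ _ (nat_of_ord i) (ltn_ord i) small_i).
  have [U [[sub_U cost_U] size_U]] := IH T (leq_trans lt_TS lt_def) le_Tk.
  exists U; split => //; split => p le_pn.
    exact: subset_trans (sub_T p le_pn) (sub_U p le_pn).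
  exact: leq_trans (cost_U p le_pn) (cost_T p le_pn).
exists S; split => [|p le_pn]; first by split => p _; rewrite ?subxx.
by rewrite le_Sk // andbT leqNgt; exact: large (Ordinal (le_pn : p < n.+1)).
Qed.

End Padding.

Section ConfigurationGraph.
Variables (V : finType) (tau : nat) (G : nat -> rel V) (k l : nat).
Variables (N : finType) (arc : rel N) (s t : N) (lay : N -> nat) (gamma : N -> {set V}).
Hypothesis tau_gt0 : 0 < tau.
Hypothesis cfg : config_graph tau G k l arc s t lay gamma.

Definition inner (v : N) := (v != s) && (v != t).

Definition layered_chain (j : nat) (F : nat -> N) :=
  forall i, j <= i <= tau ->
    [/\ inner (F i), lay (F i) = i & i < tau -> arc (F i) (F i.+1)].

Lemma path_to_sink_layered_chain x p : inner x -> path arc x p -> last x p = t ->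
  exists2 F, F (lay x) = x & layered_chain (lay x) F.
Proof.
have [_ _ _ _ arcP] := cfg.
elim: p x => [|y p IH] x inner_x /=.
  by move=> _ x_t; move: inner_x; rewrite /inner x_t eqxx andbF.
case/andP=> arc_xy walk_y last_t.
case/arcP: (arc_xy) => [[x_s _]|[_ [y_t lay_x]]|[_ inner_y lay_y _]].
- by move: inner_x; rewrite /inner x_s eqxx.
- by exists (fun=> x) => // i range; split => //; lia.
have [F F_y chain_F] := IH y inner_y walk_y last_t.
exists (fun i => if i == lay x then x else F i) => [|i range]; first by rewrite eqxx.
case: eqP => [->|ne_ix].
  by split=> // _; rewrite gtn_eqF // -lay_y F_y.
have [inner_F lay_F arc_F] := chain_F i ltac:(lia).
by split=> // lt_it; rewrite gtn_eqF ?arc_F //; lia.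
Qed.

Lemma connect_layered_chain : connect arc s t <-> exists F, layered_chain 1 F.
Proof.
have [s_neq_t _ _ _ arcP] := cfg.
split.
  case/connectP => -[|y p] /=; first by move=> _ t_s; rewrite t_s eqxx in s_neq_t.
  case/andP=> /arcP[[_ [inner_y lay_y]]|[inner_s _]|[inner_s _ _ _]] walk_y last_t;
    try by rewrite eqxx in inner_s.
  have [F _ chain_F] := path_to_sink_layered_chain inner_y walk_y (esym last_t).
  by exists F; rewrite -lay_y.
move=> [F chain_F].
have reach i : 1 <= i <= tau -> connect arc s (F i).
  elim: i => // i IH /andP[_ le_it].
  have [inner_F lay_F _] := chain_F i.+1 ltac:(lia).
  have [i_0|i_gt0] := posnP i.
    by subst i; apply: connect1; apply/arcP/Or31; do !split.
  apply: connect_trans (IH _) (connect1 _); first lia.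
  by have [_ _] := chain_F i ltac:(lia); apply.
apply: connect_trans (reach tau _) (connect1 _); first lia.
by have [inner_F lay_F _] := chain_F tau ltac:(lia); apply/arcP/Or32; do !split.
Qed.

Lemma layered_chain_mvc_yes : (exists F, layered_chain 1 F) -> mvc_yes tau G k l.
Proof.
have [_ _ _ cover_iff arcP] := cfg.
move=> [F chain_F]; exists (fun i => gamma (F i)); split => i range.
  have [inner_F lay_F _] := chain_F i range.
  have [cover size] :=
    (cover_iff i _ range).2 (ex_intro _ (F i) (And3 inner_F lay_F erefl)).
  by split => //; case/orP: size => /eqP ->; rewrite ?leq_pred.
have [inner_F _ arc_F] := chain_F i ltac:(lia).
have [inner_F' _ _] := chain_F i.+1 ltac:(lia).
case/arcP: (arc_F ltac:(lia)) => [[F_s _]|[_ [F_t _]]|[_ _ _ //]].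
  by rewrite F_s /inner eqxx in inner_F.
by rewrite F_t /inner eqxx andbF in inner_F'.
Qed.

Lemma mvc_yes_layered_chain :
  k < #|V| -> mvc_yes tau G k l -> exists F, layered_chain 1 F.
Proof.
have [_ _ _ cover_iff arcP] := cfg.
move=> k_lt_V [S [cover_S cost_S]].
have S_max i : 0 < i -> S (maxn 1 i) = S i by move/maxn_idPr ->.
(* Repeating S 1 at time 0 lets the padding lemma work on [0, tau]. *)
have [T [[sub_T cost_T] size_T]] := exists_padding k_lt_V (S := fun i => S (maxn 1 i))
  (n := tau) (fun i le_it => (cover_S (maxn 1 i) ltac:(lia)).2).
have T_cover i : 1 <= i <= tau -> exists v, [/\ inner v, lay v = i & gamma v = T i].
  move=> range; apply/(cover_iff i (T i) range); split; last by have := size_T i; lia.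
  have sub := sub_T i ltac:(lia); rewrite /= S_max in sub; last lia.
  move=> u w e_uw; have /orP := (cover_S i range).1 u w e_uw.
  by case=> /(subsetP sub) ->; rewrite ?orbT.
pose F i := odflt s [pick v | [&& inner v, lay v == i & gamma v == T i]].
have F_spec i : 1 <= i <= tau -> [/\ inner (F i), lay (F i) = i & gamma (F i) = T i].
  move=> range; rewrite /F; case: pickP => [v /and3P[? /eqP ? /eqP ?] //|none].
  have [v [inner_v lay_v gamma_v]] := T_cover i range.
  by move: (none v); rewrite inner_v lay_v gamma_v !eqxx.
exists F => i range; have [inner_F lay_F gamma_F] := F_spec i range; split => // lt_it.
have [inner_F' lay_F' gamma_F'] := F_spec i.+1 ltac:(lia).
apply/arcP; apply: Or33; split => //; first by rewrite lay_F lay_F'.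
rewrite gamma_F gamma_F'; apply: leq_trans (cost_T i lt_it) _.
by rewrite /= !S_max; [apply: cost_S; lia | lia | lia].
Qed.

End ConfigurationGraph.

Theorem lemma14 (V : finType) (tau : nat) (G : nat -> rel V) (k l : nat)
  (N : finType) (arc : rel N) (s t : N) (lay : N -> nat) (gamma : N -> {set V}) :
  0 < tau ->
  (forall i, 1 <= i <= tau -> simple_graph (G i)) ->
  0 < k < #|V| ->
  config_graph tau G k l arc s t lay gamma ->
  (mvc_yes tau G k l <-> connect arc s t).
Proof.
move=> tau_gt0 _ /andP[_ k_lt_V] cfg.
rewrite (connect_layered_chain tau_gt0 cfg).
split; first exact: mvc_yes_layered_chain tau_gt0 cfg k_lt_V.
exact: layered_chain_mvc_yes cfg.
Qed.
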